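(* Let $n\ge2$, $m\ge0$ and $p$ be fixed integers with $0\le p\le 2n+\lfloor m/2\rfloor-3$. Then there is a polynomial $\beta_p(j)$ in $j$ of degree at most $2(2n+\lfloor m/2\rfloor-3-p)$ such that for every integer $j$ with $1\le j\le n-1$, the coefficient of $x^p$ in $$(2x+m+1)_j\,(x-j+2)_{\lfloor m/2\rfloor+j-1}\,(x+m+2j+1)_{2n-2j-2}$$ equals $2^j\beta_p(j)$.
   Context: $(a)_k:=a(a+1)\cdots(a+k-1)$ for $k\ge1$, $(a)_0:=1$. *)

From HB Require Import structures.
From mathcomp Require Import all_boot all_order all_algebra.
Set Implicit Arguments. Unset Strict Implicit. Unset Printing Implicit Defensive.
Import Order.TTheory GRing.Theory Num.Theory.
Local Open Scope ring_scope.

Definition poch (a : {poly rat}) (k : nat) : {poly rat} :=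
  \prod_(i < k) (a + (i%:R)%:P).

Definition prodA9 (n m j : nat) : {poly rat} :=
  poch (2%:R *: 'X + (m%:R + 1)%:P) j
  * poch ('X - (j%:R)%:P + 2%:R%:P) (m./2 + j - 1)
  * poch ('X + (m%:R + 2 * j%:R + 1)%:P) (2 * n - 2 * j - 2).

From HB Require Import structures.
From mathcomp Require Import all_boot all_order all_algebra.
From mathcomp Require Import ring zify.
Import Order.TTheory GRing.Theory Num.Theory.
Set Implicit Arguments. Unset Strict Implicit.
Local Open Scope ring_scope.

(* All N = 2n + floor(m/2) - 3 factors of the product are linear, u x + a, so
   the coefficient of x^p is the coefficient of x^(N-p) in the product of the
   reversed factors a x + u.  Read backwards where necessary, the three blocks
   of reversed factors become 2^j times products prod_(i < L) (1 + (c + h i) x)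
   with c, h independent of j and lengths L affine in j.  The t-th coefficient
   e_t(L) of such a product is a polynomial of degree at most 2t in L, because
   e_(t+1)(L) = sum_(l < L) (c + h l) e_t(l) and summation over l < L raises
   the degree of a polynomial by one. *)

Section LinearFactors.
Variable R : comNzRingType.
Implicit Types (u a x : R) (p q : {poly R}).

Lemma size_polyM_le p q m n :
  (size p <= m.+1)%N -> (size q <= n.+1)%N -> (size (p * q)%R <= (m + n).+1)%N.
Proof.
move=> p_m q_n; rewrite (leq_trans (size_polyMleq _ _)) // -subn1 leq_subLR.
by rewrite (leq_trans (leq_add p_m q_n)) // addSn add1n addnS.
Qed.

Definition linear_poly u a : {poly R} := u *: 'X + a%:P.

Lemma size_linear_poly u a : (size (linear_poly u a) <= 2)%N.
Proof.
rewrite (leq_trans (size_polyD _ _)) // geq_max (leq_trans (size_polyC_leq1 _)) // andbT.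
by rewrite (leq_trans (size_scale_leq _ _)) // size_polyX.
Qed.

Lemma horner_linear_poly u a x : (linear_poly u a).[x] = u * x + a.
Proof. by rewrite hornerD hornerZ hornerX hornerC. Qed.

Lemma coef_linear_polyM u a p i :
  (linear_poly u a * p)`_i = u * (if i == 0%N then 0 else p`_i.-1) + a * p`_i.
Proof. by rewrite mulrDl coefD -scalerAl coefZ coefXM coefCM. Qed.

Lemma size_prod_linear_poly (I : Type) (s : seq I) (u a : I -> R) :
  (size (\prod_(i <- s) linear_poly (u i) (a i))%R <= (size s).+1)%N.
Proof.
elim: s => [|i s IH]; first by rewrite big_nil size_poly1.
by rewrite big_cons (leq_trans (size_polyM_le (size_linear_poly _ _) IH)) ?add1n.
Qed.

Lemma coef_prod_linear_poly_rev (s : seq (R * R)) i : (i <= size s)%N ->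
  (\prod_(f <- s) linear_poly f.1 f.2)`_i
  = (\prod_(f <- s) linear_poly f.2 f.1)`_(size s - i).
Proof.
elim: s i => [|[u a] s IH] i /=.
  by rewrite leqn0 => /eqP ->; rewrite !big_nil.
rewrite !big_cons !coef_linear_polyM /=.
set P := \prod_(f <- s) linear_poly f.1 f.2; set Q := \prod_(f <- s) linear_poly f.2 f.1.
have P_high : P`_(size s).+1 = 0.
  by apply: (leq_sizeP _ _ (size_prod_linear_poly _ _ _)).
have Q_high : Q`_(size s).+1 = 0.
  by apply: (leq_sizeP _ _ (size_prod_linear_poly _ _ _)).
case: i => [|i] le_is.
  by rewrite subn0 /= Q_high IH // subn0 mulr0 add0r addr0.
rewrite subSS /=; move: le_is; rewrite ltnS leq_eqVlt => /orP[/eqP -> | lt_is].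
  by rewrite subnn P_high IH // subnn mulr0 add0r addr0.
have -> : (size s - i == 0)%N = false by rewrite subn_eq0 leqNgt lt_is.
by rewrite !IH ?(ltnW lt_is) // subnS addrC.
Qed.

End LinearFactors.

Section PolynomialOn.
Variable R : comNzRingType.
Implicit Types (A : {pred nat}) (f g : nat -> R).

Definition polynomial_on A d f :=
  exists2 q : {poly R}, (size q <= d.+1)%N & {in A, forall j, f j = q.[j%:R]}.

Lemma eq_polynomial_on A d f g :
  {in A, f =1 g} -> polynomial_on A d f -> polynomial_on A d g.
Proof. by move=> eq_fg [q q_size q_f]; exists q => // j jA; rewrite -eq_fg ?q_f. Qed.

Lemma polynomial_on_le A d d' f :
  (d <= d')%N -> polynomial_on A d f -> polynomial_on A d' f.
Proof. by move=> le_dd' [q q_size q_f]; exists q => //; apply: leq_trans q_size _. Qed.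

Lemma polynomial_onM A d1 d2 f g :
  polynomial_on A d1 f -> polynomial_on A d2 g ->
  polynomial_on A (d1 + d2) (fun j => f j * g j).
Proof.
move=> [q q_size q_f] [r r_size r_g]; exists (q * r); first exact: size_polyM_le.
by move=> j jA; rewrite hornerM q_f ?r_g.
Qed.

Lemma polynomial_on_sum A d K (F : nat -> nat -> R) :
  (forall i, (i < K)%N -> polynomial_on A d (F i)) ->
  polynomial_on A d (fun j => \sum_(i < K) F i j).
Proof.
elim: K => [|K IH] F_poly.
  by exists 0 => [|j _]; rewrite ?size_poly0 // big_ord0 horner0.
have [q q_size q_F] := IH (fun i lt_iK => F_poly i (ltnW lt_iK)).
have [r r_size r_F] := F_poly K (ltnSn K).
exists (q + r) => [|j jA].
  by rewrite (leq_trans (size_polyD _ _)) // geq_max q_size.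
by rewrite big_ord_recr /= hornerD q_F ?r_F.
Qed.

Lemma polynomial_on_coefM A w (P Q : nat -> {poly R}) :
  (forall t, polynomial_on A (w * t) (fun j => (P j)`_t)) ->
  (forall t, polynomial_on A (w * t) (fun j => (Q j)`_t)) ->
  forall t, polynomial_on A (w * t) (fun j => (P j * Q j)`_t).
Proof.
move=> P_poly Q_poly t.
apply: eq_polynomial_on (fun j _ => esym (coefM (P j) (Q j) t)) _.
apply: (polynomial_on_sum (F := fun i j => (P j)`_i * (Q j)`_(t - i))) => i lt_it.
by have := polynomial_onM (P_poly i) (Q_poly (t - i)%N); rewrite -mulnDr subnKC.
Qed.

Lemma polynomial_on_comp_affine A d (g : nat -> R) (len : nat -> nat) (al be : R) :
  polynomial_on predT d g -> {in A, forall j, (len j)%:R = al + be * j%:R} ->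
  polynomial_on A d (fun j => g (len j)).
Proof.
move=> [q q_size q_g] len_affine; exists (q \Po linear_poly be al) => [|j jA].
  rewrite (leq_trans (size_comp_poly_leq _ _)) //.
  move: q_size (size_linear_poly be al).
  move: (size q) (size (linear_poly be al)) => a b; rewrite -!subn1; nia.
by rewrite horner_comp horner_linear_poly addrC -len_affine ?q_g.
Qed.

End PolynomialOn.

Section DiscreteSums.
Variable R : numFieldType.

Definition falling_poly d : {poly R} := \prod_(i < d) ('X - (i%:R)%:P).

Lemma size_falling_poly d : size (falling_poly d) = d.+1.
Proof. by rewrite size_prod_XsubC; unlock index_enum; rewrite -enumT size_enum_ord. Qed.

Lemma coef_falling_poly d : (falling_poly d)`_d = 1.
Proof.
have /monicP := monic_prod_XsubC (index_enum 'I_d) predT (fun i => i%:R : R).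
by rewrite lead_coefE size_falling_poly.
Qed.

Lemma horner_falling_poly d x : (falling_poly d).[x] = \prod_(i < d) (x - i%:R).
Proof. by rewrite horner_prod; apply: eq_bigr => i _; rewrite hornerXsubC. Qed.

Lemma sum_falling_poly d L :
  \sum_(l < L) (falling_poly d).[l%:R] = (falling_poly d.+1).[L%:R] / d.+1%:R.
Proof.
elim: L => [|L IH].
  by rewrite big_ord0 horner_falling_poly big_ord_recl subrr mul0r mul0r.
rewrite big_ord_recr /= IH !horner_falling_poly big_ord_recr [in RHS]big_ord_recl /=.
have -> : \prod_(i < d) (L.+1%:R - (lift ord0 i)%:R) = \prod_(i < d) (L%:R - i%:R : R).
  by apply: eq_bigr => i _; rewrite /= /bump /= add1n !mulrSr; ring.
by rewrite subr0; field; rewrite -mulrS pnatr_eq0.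
Qed.

Lemma polynomial_on_partial_sum d (q : {poly R}) : (size q <= d)%N ->
  polynomial_on predT d (fun L => \sum_(l < L) q.[l%:R]).
Proof.
elim: d q => [|d IH] q q_size.
  move: q_size; rewrite size_poly_leq0 => /eqP ->.
  by exists 0 => [|L _]; rewrite ?size_poly0 // horner0 big1 // => l _; rewrite horner0.
pose r := q - q`_d *: falling_poly d.
have r_size : (size r <= d)%N.
  have r_size1 : (size r <= d.+1)%N.
    rewrite (leq_trans (size_polyD _ _)) // size_polyN geq_max q_size.
    by rewrite (leq_trans (size_scale_leq _ _)) // size_falling_poly.
  apply/leq_sizeP => k; rewrite leq_eqVlt => /orP[/eqP <- | lt_dk].
    by rewrite coefB coefZ coef_falling_poly mulr1 subrr.
  exact: (leq_sizeP _ _ r_size1).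
have [Q Q_size Q_sum] := IH r r_size.
exists (Q + (q`_d / d.+1%:R) *: falling_poly d.+1) => [|L _].
  rewrite (leq_trans (size_polyD _ _)) // geq_max (leq_trans Q_size) //.
  by rewrite (leq_trans (size_scale_leq _ _)) // size_falling_poly.
rewrite hornerD hornerZ mulrAC -mulrA -sum_falling_poly mulr_sumr -Q_sum // -big_split.
by apply: eq_bigr => l _; rewrite /= -hornerZ -hornerD /r subrK.
Qed.

End DiscreteSums.

Section ArithmeticProducts.
Variable R : numFieldType.
Implicit Types (c h u : R) (L t : nat).

Definition arith_prod c h L : {poly R} :=
  \prod_(i < L) linear_poly (c + h * i%:R) 1.

Lemma prod_linear_poly_arith u c h L : u != 0 ->
  \prod_(i < L) linear_poly (c + h * i%:R) u
  = (u ^+ L)%:P * arith_prod (c / u) (h / u) L.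
Proof.
move=> u_neq0.
have -> : (u ^+ L)%:P = \prod_(i < L) u%:P by rewrite prodr_const card_ord rmorphXn.
rewrite /arith_prod -big_split; apply: eq_bigr => i _ /=.
rewrite /linear_poly mul_polyC scalerDr scalerA scale_polyC mulr1.
by congr (_ *: _ + _); field.
Qed.

Lemma arith_prod_rev c c' h L : c + h * L%:R = c' + h ->
  arith_prod c h L = arith_prod c' (- h) L.
Proof.
move=> c_c'; rewrite /arith_prod (reindex_inj rev_ord_inj).
apply: eq_bigr => i _; congr linear_poly.
by rewrite /= natrB // mulrBr addrA c_c' mulrSr; ring.
Qed.

Lemma coef_arith_prod0 c h L : (arith_prod c h L)`_0 = 1.
Proof.
elim: L => [|L IH]; first by rewrite /arith_prod big_ord0 coefC.
rewrite /arith_prod big_ord_recr /= mulrC coef_linear_polyM -/(arith_prod c h L).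
by rewrite IH mulr0 add0r mul1r.
Qed.

Lemma coef_arith_prodS c h L t :
  (arith_prod c h L)`_t.+1 = \sum_(l < L) (c + h * l%:R) * (arith_prod c h l)`_t.
Proof.
elim: L => [|L IH]; first by rewrite big_ord0 /arith_prod big_ord0 coefC.
rewrite big_ord_recr /= -IH /arith_prod big_ord_recr /= mulrC coef_linear_polyM.
by rewrite -/(arith_prod c h L) mul1r addrC.
Qed.

Lemma coef_arith_prod_polynomial_on c h t :
  polynomial_on predT (2 * t) (fun L => (arith_prod c h L)`_t).
Proof.
elim: t => [|t [q q_size q_coef]].
  by exists 1 => [|L _]; rewrite ?size_poly1 // coef_arith_prod0 hornerC.
have [|Q Q_size Q_sum] := @polynomial_on_partial_sum R (2 * t).+2 (linear_poly h c * q).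
  by rewrite (leq_trans (size_polyM_le (size_linear_poly _ _) q_size)) ?add1n.
exists Q => [|L _]; first by rewrite mulnS.
rewrite coef_arith_prodS -Q_sum //; apply: eq_bigr => l _.
by rewrite hornerM horner_linear_poly q_coef // addrC.
Qed.

End ArithmeticProducts.

Definition factorsA9 (n m j : nat) : seq (rat * rat) :=
  [seq (2, m%:R + 1 + i%:R) | i <- index_iota 0 j]
  ++ [seq (1, 2 - j%:R + i%:R) | i <- index_iota 0 (m./2 + j - 1)]
  ++ [seq (1, m%:R + 2 * j%:R + 1 + i%:R) | i <- index_iota 0 (2 * n - 2 * j - 2)].

Lemma prodA9_factorsA9 n m j :
  prodA9 n m j = \prod_(f <- factorsA9 n m j) linear_poly f.1 f.2.
Proof.
rewrite /prodA9 /poch /factorsA9 !big_cat !big_map !big_mkord /= mulrA.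
by congr (_ * _ * _); apply: eq_bigr => i _;
  rewrite /linear_poly ?scale1r !polyCD ?polyCN; ring.
Qed.

Lemma size_factorsA9 n m j : (1 <= j <= n - 1)%N ->
  size (factorsA9 n m j) = (2 * n + m./2 - 3)%N.
Proof. by rewrite !size_cat !size_map !size_iota; lia. Qed.

Lemma rev_factorsA9 n m j : (1 <= j <= n - 1)%N ->
  \prod_(f <- factorsA9 n m j) linear_poly f.2 f.1
  = (2 ^+ j)%:P * (arith_prod ((m%:R + 1) / 2) (1 / 2) j
     * (arith_prod (m./2)%:R (-1) (m./2 + j - 1)
        * arith_prod (m%:R + 2 * n%:R - 2) (-1) (2 * n - 2 * j - 2))).
Proof.
case/andP=> j_ge1 j_le; rewrite /factorsA9 !big_cat !big_map !big_mkord /=.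
rewrite [RHS]mulrA; congr (_ * (_ * _)).
- rewrite -prod_linear_poly_arith //; apply: eq_bigr => i _; congr linear_poly; ring.
- rewrite -(@arith_prod_rev _ (2 - j%:R)).
    by apply: eq_bigr => i _; rewrite mul1r.
  by rewrite natrB ?natrD; [ring | lia].
- rewrite -(@arith_prod_rev _ (m%:R + 2 * j%:R + 1)).
    by apply: eq_bigr => i _; rewrite mul1r.
  by rewrite !natrB ?natrM; [ring | lia | lia].
Qed.

Theorem lemmaA9 (n m p : nat) :
  (2 <= n)%N -> (p <= 2 * n + m./2 - 3)%N ->
  exists beta : {poly rat},
    (size beta <= (2 * (2 * n + m./2 - 3 - p)).+1)%N /\
    forall j : nat, (1 <= j <= n - 1)%N ->
      (prodA9 n m j)`_p = 2%:R ^+ j * beta.[j%:R].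
Proof.
move=> n_ge2 p_le; set k := (2 * n + m./2 - 3 - p)%N.
pose A : {pred nat} := [pred j | 1 <= j <= n - 1]%N.
have [beta beta_size beta_coef] : polynomial_on (R := rat) A (2 * k) (fun j =>
    (arith_prod ((m%:R + 1) / 2) (1 / 2) j
     * (arith_prod (m./2)%:R (-1) (m./2 + j - 1)
        * arith_prod (m%:R + 2 * n%:R - 2) (-1) (2 * n - 2 * j - 2)))`_k).
  apply: polynomial_on_coefM => t.
    apply: (polynomial_on_comp_affine (len := id) (al := 0) (be := 1)
      (coef_arith_prod_polynomial_on _ _ t)).
    by move=> j _; rewrite add0r mul1r.
  apply: polynomial_on_coefM => {}t.
    apply: (polynomial_on_comp_affine (len := fun j => (m./2 + j - 1)%N)
      (al := (m./2)%:R - 1) (be := 1) (coef_arith_prod_polynomial_on _ _ t)).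
    by move=> j /andP[j_ge1 _]; rewrite natrB ?natrD; [ring | lia].
  apply: (polynomial_on_comp_affine (len := fun j => (2 * n - 2 * j - 2)%N)
    (al := 2 * n%:R - 2) (be := -2) (coef_arith_prod_polynomial_on _ _ t)).
  by move=> j /andP[_ j_le]; rewrite !natrB ?natrM; [ring | lia | lia].
exists beta; split => // j j_range.
rewrite prodA9_factorsA9 coef_prod_linear_poly_rev size_factorsA9 //.
by rewrite -/k rev_factorsA9 // coefCM -beta_coef.
Qed.
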